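(* Let $d\ge 1$, let $0<s_0<s_1$ and $0<\alpha_0<\alpha_1$, set $W=[s_0,s_1]\times[\alpha_0,\alpha_1]$, and let $g\in L^2_0(\mathbb{T}^d;\mathbb{C})$ with Fourier coefficients $(\hat g_k)_{k\in\mathbb{Z}^d}$. Define $\mathcal{S}:W\to\ell^2(\mathbb{Z}^d)$ by $$\mathcal{S}(s,\alpha)=\Big(\frac{\alpha}{\alpha+|k|^{2s}}\,\hat g_k\Big)_{k\in\mathbb{Z}^d}.$$ Then $\mathcal{S}$ is twice Fréchet differentiable on $W$ (in particular continuous). For $h_1,h_2\in\mathbb{R}$ its partial derivatives up to order two are given by $\partial_s\mathcal{S}(s,\alpha)[h_1]=h_1\partial_s\mathcal{S}(s,\alpha)$, $\partial_s^2\mathcal{S}(s,\alpha)[h_1,h_2]=h_1h_2\partial_s^2\mathcal{S}(s,\alpha)$, $\partial_\alpha\mathcal{S}(s,\alpha)[h_1]=h_1\partial_\alpha\mathcal{S}(s,\alpha)$, $\partial_\alpha^2\mathcal{S}(s,\alpha)[h_1,h_2]=h_1h_2\partial_\alpha^2\mathcal{S}(s,\alpha)$, $\partial_{\alpha,s}\mathcal{S}(s,\alpha)[h_1,h_2]=h_1h_2\partial_{\alpha,s}\mathcal{S}(s,\alpha)$, where the following sequences are indexed by $k\in\mathbb{Z}^d\setminus\{0\}$ (the $k=0$ entries being $0$): $$\partial_s\mathcal{S}(s,\alpha)=\Big(-\frac{2\alpha|k|^{2s}\ln|k|}{(|k|^{2s}+\alpha)^2}\hat g_k\Big)_k,\qquad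 \partial_s^2\mathcal{S}(s,\alpha)=\Big(\frac{4\alpha|k|^{2s}(\ln|k|)^2(|k|^{2s}-\alpha)}{(\alpha+|k|^{2s})^3}\hat g_k\Big)_k,$$ $$\partial_\alpha\mathcal{S}(s,\alpha)=\Big(\frac{|k|^{2s}}{(|k|^{2s}+\alpha)^2}\hat g_k\Big)_k,\qquad \partial_\alpha^2\mathcal{S}(s,\alpha)=\Big(\frac{-2|k|^{2s}}{(|k|^{2s}+\alpha)^3}\hat g_k\Big)_k,$$ $$\partial_{\alpha,s}\mathcal{S}(s,\alpha)=\Big(\frac{-2|k|^{2s}\ln|k|\,(|k|^{2s}-\alpha)}{(|k|^{2s}+\alpha)^3}\hat g_k\Big)_k.$$
   Context: $\mathbb{T}^d=\mathbb{R}^d/(2\pi\mathbb{Z})^d$; $L^2_0(\mathbb{T}^d;\mathbb{C})$ denotes the square-integrable complex functions with zero mean. With $\varphi^k(x)=e^{ik\cdot x}$, the Fourier coefficients are $\hat u_k=(u,\varphi^k)_{L^2}=\int_{\mathbb{T}^d}u\,\overline{\varphi^k}\,dx$, so that $u=(2\pi)^{-d}\sum_k\hat u_k\varphi^k$. The convention $|0|^{2s}=0$ is used, so the $k=0$ entry of $\mathcal{S}(s,\alpha)$ is $\hat g_0=0$. $\mathcal{S}(s,\alpha)$ is the Fourier coefficient sequence of the solution $u$ of $(-\Delta)^s u+\alpha u=\alpha g$. *)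

From HB Require Import structures.
From mathcomp Require Import all_boot all_order all_algebra.
From mathcomp Require Import all_classical all_reals all_analysis.
From mathcomp Require Import complex.
Set Implicit Arguments. Unset Strict Implicit. Unset Printing Implicit Defensive.
Import Order.TTheory GRing.Theory Num.Theory.
Local Open Scope complex_scope.
Local Open Scope ring_scope.
Local Open Scope classical_set_scope.

Definition freq (d : nat) := 'rV[int]_d.

Section Defs.
Variable R : realType.

Definition knorm (d : nat) (k : freq d) : R :=
  Num.sqrt (\sum_(i < d) ((k ord0 i)%:~R : R) ^+ 2).

Definition cmod2 (z : R[i]) : R := (complex.Re z) ^+ 2 + (complex.Im z) ^+ 2.

Definition l2norm2 (d : nat) (u : freq d -> R[i]) : \bar R :=
  (\esum_(k in [set: freq d]) (cmod2 (u k))%:E)%E.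

Definition in_l2 (d : nat) (u : freq d -> R[i]) : Prop := (l2norm2 u < +oo)%E.

(* l^2 norm (meaningful for u in l^2) *)
Definition l2norm (d : nat) (u : freq d -> R[i]) : R := Num.sqrt (fine (l2norm2 u)).

Definition nrm2 (h : R * R) : R := Num.sqrt (h.1 ^+ 2 + h.2 ^+ 2).

Definition shift (p h : R * R) : R * R := (p.1 + h.1, p.2 + h.2).

(* The map S(s, alpha) = (alpha / (alpha + |k|^{2s}) ghat_k)_k.
   powR 0 x = 0 for x <> 0, matching the convention |0|^{2s} = 0. *)
Definition Ssol (d : nat) (g : freq d -> R[i]) (p : R * R) : freq d -> R[i] :=
  fun k => ((p.2 / (p.2 + knorm k `^ (2 * p.1)))%:C * g k).

Definition dS_s (d : nat) (g : freq d -> R[i]) (p : R * R) : freq d -> R[i] :=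
  fun k => if k == 0 then 0 else
    let x := knorm k `^ (2 * p.1) in let a := p.2 in
    ((- (2 * a * x * ln (knorm k)) / (x + a) ^+ 2)%:C * g k).

Definition dS_ss (d : nat) (g : freq d -> R[i]) (p : R * R) : freq d -> R[i] :=
  fun k => if k == 0 then 0 else
    let x := knorm k `^ (2 * p.1) in let a := p.2 in
    ((4 * a * x * (ln (knorm k)) ^+ 2 * (x - a) / (a + x) ^+ 3)%:C * g k).

Definition dS_a (d : nat) (g : freq d -> R[i]) (p : R * R) : freq d -> R[i] :=
  fun k => if k == 0 then 0 else
    let x := knorm k `^ (2 * p.1) in let a := p.2 in
    ((x / (x + a) ^+ 2)%:C * g k).

Definition dS_aa (d : nat) (g : freq d -> R[i]) (p : R * R) : freq d -> R[i] :=
  fun k => if k == 0 then 0 else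
    let x := knorm k `^ (2 * p.1) in let a := p.2 in
    ((- 2 * x / (x + a) ^+ 3)%:C * g k).

Definition dS_as (d : nat) (g : freq d -> R[i]) (p : R * R) : freq d -> R[i] :=
  fun k => if k == 0 then 0 else
    let x := knorm k `^ (2 * p.1) in let a := p.2 in
    ((- 2 * x * ln (knorm k) * (x - a) / (x + a) ^+ 3)%:C * g k).

(* F : R^2 -> l^2 is Frechet differentiable within W at p with derivative
   the bounded linear map DF(p)[h] = h1 * A + h2 * B (A, B in l^2):
   || F(p+h) - F(p) - (h1 A + h2 B) || = o(|h|) as h -> 0 with p + h in W. *)
Definition frechet_within (d : nat) (W : set (R * R)) (F : R * R -> freq d -> R[i])
    (p : R * R) (A B : freq d -> R[i]) : Prop :=
  in_l2 A /\ in_l2 B /\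
  forall e : R, 0 < e -> exists2 delta : R, 0 < delta &
    forall h : R * R, W (shift p h) -> nrm2 h < delta ->
      in_l2 (fun k => F (shift p h) k - F p k - (h.1%:C * A k + h.2%:C * B k)) /\
      l2norm (fun k => F (shift p h) k - F p k - (h.1%:C * A k + h.2%:C * B k))
        <= e * nrm2 h.

(* The first derivative DF : W -> L(R^2, l^2), DF(q)[k] = k1 A(q) + k2 B(q), is
   Frechet differentiable within W at p with second derivative
   D2F(p)[h][k] = h1 k1 Css + (h1 k2 + h2 k1) Csa + h2 k2 Caa, i.e.
   || DF(p+h) - DF(p) - D2F(p)[h] ||_{op} = o(|h|); the operator-norm bound
   ||T||_op <= c is written out as ||T k|| <= c |k| for all k in R^2. *)
Definition frechet2_within (d : nat) (W : set (R * R))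
    (A B : R * R -> freq d -> R[i]) (p : R * R)
    (Css Csa Caa : freq d -> R[i]) : Prop :=
  in_l2 Css /\ in_l2 Csa /\ in_l2 Caa /\
  forall e : R, 0 < e -> exists2 delta : R, 0 < delta &
    forall h : R * R, W (shift p h) -> nrm2 h < delta ->
      forall k : R * R,
        let T := fun j =>
          k.1%:C * (A (shift p h) j - A p j) + k.2%:C * (B (shift p h) j - B p j)
          - ((h.1 * k.1)%:C * Css j + (h.1 * k.2 + h.2 * k.1)%:C * Csa j
             + (h.2 * k.2)%:C * Caa j) in
        in_l2 T /\ l2norm T <= e * nrm2 h * nrm2 k.

End Defs.

(* Fix a frequency k <> 0 and put c = 2 ln |k| >= 0, so that |k|^(2s) = e^(c s) >= 1
   on W.  The k-th coefficient of S(s, alpha) is symb alpha (e^(c s)) * ghat_k with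
   symb a y = a / (a + y), and every partial derivative of (s, a) |-> symb a (e^(c s))
   of order at most 3 is a sum of terms c^j a^i * y P(a, y) / (a + y)^(n + 2) with
   j <= 3 and deg P <= n, hence of size at most C c^j / y = C c^j e^(-c s).  Since
   c^j <= (1 + 6 / s0^3) e^(c s) for s >= s0, these derivatives are bounded on W by a
   constant independent of k.  Taylor's formula then bounds the k-th coefficient of
   the first order remainders of S and of its first derivative by a multiple of
   |h|^2 |ghat_k|, so these remainders are O(|h|^2) = o(|h|) in l^2. *)

From Pilot Require Import Defs.
From HB Require Import structures.
From mathcomp Require Import all_boot all_order all_algebra.
From mathcomp Require Import all_classical all_reals all_analysis.
From mathcomp Require Import complex ring lra zify.
Set Implicit Arguments.
Unset Strict Implicit.
Unset Printing Implicit Defensive.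
Import Order.TTheory GRing.Theory Num.Theory.
Local Open Scope ring_scope.
Local Open Scope classical_set_scope.

Section MeanValueBounds.
Variable R : realType.
Implicit Types (f df ddf : R -> R) (lo hi M u v : R).

Lemma ler_dist_is_derive f df lo hi M u v :
  (forall x, lo <= x <= hi -> is_derive x 1 f (df x)) ->
  (forall x, lo <= x <= hi -> `|df x| <= M) ->
  lo <= u <= hi -> lo <= v <= hi -> `|f v - f u| <= M * `|v - u|.
Proof.
move=> hd hb.
wlog uv : u v / u <= v.
  move=> H hu hv; case/orP: (le_total u v) => uv; first exact: H.
  by rewrite distrC (distrC v); exact: H.
move=> /andP[lu uh] /andP[lv vh].
have inI x : u <= x <= v -> lo <= x <= hi.
  by case/andP=> h1 h2; rewrite (le_trans lu h1) (le_trans h2 vh).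
have hd_open x : x \in `]u, v[%R -> is_derive x 1 f (df x).
  by rewrite in_itv /= => /andP[h1 h2]; apply/hd/inI; rewrite !ltW.
have hder : {in `[u, v]%R, forall x, derivable f x 1}.
  by move=> x; rewrite in_itv /= => /inI/hd hx.
have [x + ->] := MVT_segment uv hd_open (derivable_within_continuous hder).
by rewrite in_itv /= normrM => hx; rewrite ler_wpM2r // hb // inI.
Qed.

Lemma ler_taylor1_remainder f df ddf lo hi M u v :
  (forall x, lo <= x <= hi -> is_derive x 1 f (df x)) ->
  (forall x, lo <= x <= hi -> is_derive x 1 df (ddf x)) ->
  (forall x, lo <= x <= hi -> `|ddf x| <= M) ->
  lo <= u <= hi -> lo <= v <= hi ->
  `|f v - f u - df u * (v - u)| <= M * (v - u) ^+ 2.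
Proof.
move=> hf hdf hb hu hv.
have M0 : 0 <= M := le_trans (normr_ge0 _) (hb u hu).
have between x : Num.min u v <= x <= Num.max u v ->
    lo <= x <= hi /\ `|x - u| <= `|v - u|.
  case/andP: hu => lu uh; case/andP: hv => lv vh.
  case/orP: (le_total u v) => uv.
    rewrite (min_idPl uv) (max_idPr uv) => /andP[h1 h2].
    rewrite (le_trans lu h1) (le_trans h2 vh) !ger0_norm ?subr_ge0 //.
    by rewrite lerD2r.
  rewrite (min_idPr uv) (max_idPl uv) => /andP[h1 h2].
  rewrite (le_trans lv h1) (le_trans h2 uh) !ler0_norm ?subr_le0 //.
  by rewrite lerN2 lerD2r.
have hpsi x : Num.min u v <= x <= Num.max u v ->
    is_derive x 1 (fun x => f x - df u * x) (df x - df u).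
  move=> /between[/hf hx _].
  apply: is_derive_eq (is_deriveB hx (is_deriveZ (df u) (is_derive_id x 1))) _.
  by rewrite /GRing.scale /= mulr1.
have hpsi_le x : Num.min u v <= x <= Num.max u v -> `|df x - df u| <= M * `|v - u|.
  move=> /between[hx hxu].
  apply: le_trans (ler_dist_is_derive hdf hb hu hx) _.
  by rewrite ler_wpM2l.
have inI : Num.min u v <= u <= Num.max u v /\ Num.min u v <= v <= Num.max u v.
  by rewrite !ge_min !le_max !lexx !orbT.
have := ler_dist_is_derive hpsi hpsi_le inI.1 inI.2.
rewrite -mulrA -expr2 real_normK ?num_real //.
by congr (_ <= _); congr `|_|; ring.
Qed.

End MeanValueBounds.

Section Taylor2.
Variable R : realType.
Variables (G Gs Ga Gss Gaa Gsa : R -> R -> R) (a0 a1 s0 s1 M : R).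
Local Notation inA a := (a0 <= a <= a1).
Local Notation inS t := (s0 <= t <= s1).
Hypotheses
  (G_s : forall a t, inA a -> inS t -> is_derive t 1 (G a) (Gs a t))
  (G_ss : forall a t, inA a -> inS t -> is_derive t 1 (Gs a) (Gss a t))
  (G_a : forall a t, inA a -> inS t -> is_derive a 1 (G^~ t) (Ga a t))
  (G_aa : forall a t, inA a -> inS t -> is_derive a 1 (Ga^~ t) (Gaa a t))
  (G_sa : forall a t, inA a -> inS t -> is_derive a 1 (Gs^~ t) (Gsa a t))
  (G2_le : forall a t, inA a -> inS t ->
    [/\ `|Gss a t| <= M, `|Gaa a t| <= M & `|Gsa a t| <= M]).

Lemma ler_taylor2_remainder a s ha hs :
  inA a -> inA (a + ha) -> inS s -> inS (s + hs) ->
  `|G (a + ha) (s + hs) - G a s - (hs * Gs a s + ha * Ga a s)|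
    <= 2 * M * (hs ^+ 2 + ha ^+ 2).
Proof.
move=> aI aI' sI sI'.
have M0 : 0 <= M by case: (G2_le aI sI) => h _ _; exact: le_trans h.
have incr (x y : R) : x + y - x = y by rewrite addrAC subrr add0r.
have T1 := ler_taylor1_remainder (@G_s (a + ha) ^~ aI') (@G_ss (a + ha) ^~ aI')
  (fun t ht => let: And3 h _ _ := G2_le aI' ht in h) sI sI'.
have T2 := ler_taylor1_remainder (fun b hb => G_a hb sI) (fun b hb => G_aa hb sI)
  (fun b hb => let: And3 _ h _ := G2_le hb sI in h) aI aI'.
have T3 := ler_dist_is_derive (fun b hb => G_sa hb sI)
  (fun b hb => let: And3 _ _ h := G2_le hb sI in h) aI aI'.
rewrite !incr in T1 T2 T3.
set X1 := G _ (s + hs) - _ - _ in T1; set X2 := G (a + ha) s - _ - _ in T2.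
set X3 := Gs _ s - _ in T3.
have -> : G (a + ha) (s + hs) - G a s - (hs * Gs a s + ha * Ga a s)
   = X1 + X2 + hs * X3 by rewrite /X1 /X2 /X3; ring.
rewrite -(real_normK (num_real hs)) -(real_normK (num_real ha)) in T1 T2 *.
have := ler_normD (X1 + X2) (hs * X3); have := ler_normD X1 X2.
have := normr_ge0 hs; have := normr_ge0 ha; have := normr_ge0 X3.
have := sqr_ge0 (`|hs| - `|ha|); rewrite normrM; nra.
Qed.

End Taylor2.

Section Symbol.
Variable R : realType.
Implicit Types (a y c t : R).

Lemma is_derive_comp_expR (f : R -> R) c t df dg :
  is_derive (expR (c * t)) 1 f df -> c * expR (c * t) * df = dg ->
  is_derive t 1 (fun t => f (expR (c * t))) dg.
Proof.
move=> hf <-.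
apply: is_derive_eq (is_derive1_comp (g := fun t => expR (c * t)) hf _) _.
change (df * (expR (c * t) * (c * 1)) = c * expR (c * t) * df).
by rewrite mulr1; ring.
Qed.

(* The multiplier of S as a function of alpha and y = |k|^(2s).  A subscript a stands
   for d/d alpha and a subscript y for the Euler derivative y d/dy, which is what
   d/ds becomes (up to the factor c) after the substitution y = e^(c s). *)
Definition symb a y := a / (a + y).
Definition symb_a a y := y / (a + y) ^+ 2.
Definition symb_aa a y := - 2 * y / (a + y) ^+ 3.
Definition symb_aaa a y := 6 * y / (a + y) ^+ 4.
Definition symb_ay a y := y * (a - y) / (a + y) ^+ 3.
Definition symb_ayy a y := y * (a ^+ 2 - 4 * a * y + y ^+ 2) / (a + y) ^+ 4.
Definition symb_aay a y := y * (4 * y - 2 * a) / (a + y) ^+ 4.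

Lemma symb_den_neq0 a c t : 0 <= a -> a + expR (c * t) != 0.
Proof. by move=> a0; rewrite gt_eqF // ltr_wpDl // expR_gt0. Qed.

Lemma is_derive_symb_s a c t : 0 <= a ->
  is_derive t 1 (fun t => symb a (expR (c * t))) (- c * a * symb_a a (expR (c * t))).
Proof.
move=> /(symb_den_neq0 c t) h; apply: is_derive_comp_expR.
by rewrite /symb_a /GRing.scale /=; field.
Qed.

Lemma is_derive_symb_a_s a c t : 0 <= a ->
  is_derive t 1 (fun t => symb_a a (expR (c * t))) (c * symb_ay a (expR (c * t))).
Proof.
move=> /(symb_den_neq0 c t) h; have h2 := expf_neq0 2 h.
apply: is_derive_comp_expR.
by rewrite /symb_ay /GRing.scale /=; field.
Qed.

Lemma is_derive_symb_ay_s a c t : 0 <= a ->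
  is_derive t 1 (fun t => symb_ay a (expR (c * t))) (c * symb_ayy a (expR (c * t))).
Proof.
move=> /(symb_den_neq0 c t) h; have h3 := expf_neq0 3 h.
apply: is_derive_comp_expR.
by rewrite /symb_ayy /GRing.scale /=; field.
Qed.

Lemma is_derive_symb_a a y : a + y != 0 -> is_derive a 1 (symb^~ y) (symb_a a y).
Proof. by move=> h; apply: is_derive_eq; rewrite /symb_a /GRing.scale /=; field. Qed.

Lemma is_derive_symb_aa a y : a + y != 0 -> is_derive a 1 (symb_a^~ y) (symb_aa a y).
Proof.
move=> h; have hn := expf_neq0 2 h; apply: is_derive_eq.
by rewrite /symb_aa /GRing.scale /=; field.
Qed.

Lemma is_derive_symb_aaa a y : a + y != 0 -> is_derive a 1 (symb_aa^~ y) (symb_aaa a y).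
Proof.
move=> h; have hn := expf_neq0 3 h; apply: is_derive_eq.
by rewrite /symb_aaa /GRing.scale /=; field.
Qed.

Lemma is_derive_symb_aay a y : a + y != 0 -> is_derive a 1 (symb_ay^~ y) (symb_aay a y).
Proof.
move=> h; have hn := expf_neq0 3 h; apply: is_derive_eq.
by rewrite /symb_aay /GRing.scale /=; field.
Qed.

End Symbol.

Section SymbolBounds.
Variable R : realType.
Implicit Types (a y P m : R).

Lemma ler_norm_weight a y P m n : 0 <= a -> 1 <= y ->
  `|P| <= m * (a + y) ^+ n -> `|y * P / (a + y) ^+ n.+2| <= m / y.
Proof.
move=> a0 y1 hP; have y0 : 0 < y := lt_le_trans ltr01 y1.
have ay : 0 < a + y by rewrite ltr_wpDl.
have mX0 : 0 <= m * (a + y) ^+ n := le_trans (normr_ge0 _) hP.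
have hy2 : y * y <= (a + y) * (a + y) by nra.
rewrite normf_div normrM (ger0_norm (ltW y0)) (ger0_norm (exprn_ge0 _ (ltW ay))).
rewrite ler_pdivrMr ?exprn_gt0 // mulrAC ler_pdivlMr // -addn2 exprD expr2.
nra.
Qed.

Lemma symb_le a y : 0 <= a -> 0 < y -> `|symb a y| <= 1.
Proof.
move=> a0 y0; have ay : 0 < a + y by rewrite ltr_wpDl.
by rewrite /symb normf_div (ger0_norm a0) (gtr0_norm ay) ler_pdivrMr // mul1r lerDl ltW.
Qed.

Lemma symb_a_le a y : 0 <= a -> 1 <= y -> `|symb_a a y| <= 1 / y.
Proof.
move=> a0 y1; have := ler_norm_weight (P := 1) (m := 1) (n := 0) a0 y1.
by rewrite /symb_a mulr1 normr1 expr0 mulr1; apply.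
Qed.

Lemma symb_aa_le a y : 0 <= a -> 1 <= y -> `|symb_aa a y| <= 2 / y.
Proof.
move=> a0 y1; rewrite /symb_aa [- 2 * _]mulrC.
by apply: ler_norm_weight => //; rewrite normrN ger0_norm // expr1; lra.
Qed.

Lemma symb_aaa_le a y : 0 <= a -> 1 <= y -> `|symb_aaa a y| <= 6 / y.
Proof.
move=> a0 y1; rewrite /symb_aaa [6 * _]mulrC.
by apply: ler_norm_weight => //; rewrite ger0_norm // expr2; nra.
Qed.

Lemma symb_ay_le a y : 0 <= a -> 1 <= y -> `|symb_ay a y| <= 1 / y.
Proof.
move=> a0 y1; apply: ler_norm_weight => //.
by rewrite expr1 mul1r ler_norml; apply/andP; split; lra.
Qed.

Lemma symb_ayy_le a y : 0 <= a -> 1 <= y -> `|symb_ayy a y| <= 2 / y.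
Proof.
move=> a0 y1; apply: ler_norm_weight => //.
have ay0 : 0 <= a * y by rewrite mulr_ge0 //; lra.
by rewrite !expr2 ler_norml; apply/andP; split; nra.
Qed.

Lemma symb_aay_le a y : 0 <= a -> 1 <= y -> `|symb_aay a y| <= 4 / y.
Proof.
move=> a0 y1; apply: ler_norm_weight => //.
by rewrite !expr2 ler_norml; apply/andP; split; nra.
Qed.

Lemma symb_ay_aay_le a1 a y : 0 <= a <= a1 -> 1 <= y ->
  `|symb_ay a y + a * symb_aay a y| <= (1 + 4 * a1) / y.
Proof.
move=> /andP[a0 aa1] y1; have w0 : 0 <= y^-1 by rewrite invr_ge0; lra.
have := symb_ay_le a0 y1; have := symb_aay_le a0 y1.
have := ler_normD (symb_ay a y) (a * symb_aay a y).
rewrite [`|a * _|]normrM (ger0_norm a0); nra.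
Qed.

End SymbolBounds.

Section SymbolConstant.
Variable R : realType.
Variables (c s0 a1 : R).

(* From (c s0)^3 / 3! <= e^(c s0): c^j <= 1 + c^3 <= pow_const * e^(c t) for j <= 3
   and t >= s0. *)
Definition pow_const := 1 + 6 / s0 ^+ 3.
Definition symb_const := (1 + a1) * (6 + 4 * a1) * pow_const.

Lemma pow_const_ge1 : 0 < s0 -> 1 <= pow_const.
Proof. by move=> s0_gt0; rewrite lerDl divr_ge0 // exprn_ge0 // ltW. Qed.

Lemma symb_const_ge1 : 0 < s0 -> 0 <= a1 -> 1 <= symb_const.
Proof.
move=> s0_gt0 a1_ge0; rewrite /symb_const.
apply: mulr_ege1; last exact: pow_const_ge1.
by apply: mulr_ege1; lra.
Qed.

Lemma pow_le_expR j t : 0 <= c -> 0 < s0 -> (j <= 3)%N -> s0 <= t ->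
  c ^+ j <= pow_const * expR (c * t).
Proof.
move=> c_ge0 s0_gt0 j3 st.
have ct0 : 0 <= c * t by rewrite mulr_ge0 // (le_trans (ltW s0_gt0)).
have e1 : 1 <= expR (c * t) by apply: le_trans (expR_ge1Dx _); rewrite lerDl.
have e3 : (c * s0) ^+ 3 <= 6 * expR (c * t).
  have := expR_ge1Dxn 2 (mulr_ge0 c_ge0 (ltW s0_gt0)).
  have : expR (c * s0) <= expR (c * t) by rewrite ler_expR ler_wpM2l.
  have : 0 <= (c * s0) ^+ 3 by rewrite exprn_ge0 // mulr_ge0 // ltW.
  have -> : 3`!%:R = 6 :> R by [].
  lra.
have c3 : c ^+ 3 <= 6 / s0 ^+ 3 * expR (c * t).
  have s3 : 0 < s0 ^+ 3 by rewrite exprn_gt0.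
  by rewrite mulrAC ler_pdivlMr // -exprMn.
have cj : c ^+ j <= 1 + c ^+ 3.
  have [c1|c1] := lerP c 1.
    by rewrite (le_trans (exprn_ile1 _ c_ge0 c1)) // lerDl exprn_ge0.
  by rewrite (le_trans (ler_weXn2l (ltW c1) j3)) // lerDr.
rewrite /pow_const mulrDl mul1r; lra.
Qed.

Lemma ler_norm_symb_term (e b f m : R) j t :
  0 <= c -> 0 < s0 -> 0 <= a1 -> e = b * c ^+ j * f ->
  `|b| <= 1 + a1 -> (j <= 3)%N -> s0 <= t -> `|f| <= m / expR (c * t) ->
  m <= 6 + 4 * a1 -> `|e| <= symb_const.
Proof.
move=> c_ge0 s0_gt0 a1_ge0 -> hb j3 st hf hm; have y0 := expR_gt0 (c * t).
have m0 : 0 <= m.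
  by have := le_trans (normr_ge0 _) hf; rewrite pmulr_lge0 ?invr_gt0.
have hcj := pow_le_expR c_ge0 s0_gt0 j3 st; have K1 := pow_const_ge1 s0_gt0.
rewrite !normrM (ger0_norm (exprn_ge0 _ c_ge0)).
apply: le_trans (_ : (1 + a1) * (pow_const * expR (c * t)) * (m / expR (c * t)) <= _).
  by rewrite ler_pM ?mulr_ge0 ?exprn_ge0 // ler_pM ?exprn_ge0.
have -> : (1 + a1) * (pow_const * expR (c * t)) * (m / expR (c * t))
    = (1 + a1) * pow_const * m by field; rewrite gt_eqF.
rewrite /symb_const.
have : 0 <= (1 + a1) * pow_const by rewrite mulr_ge0 //; lra.
nra.
Qed.

End SymbolConstant.

Section SymbolRemainders.
Variable R : realType.
Variables (c s0 s1 a0 a1 : R).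
Hypotheses (c_ge0 : 0 <= c) (s0_gt0 : 0 < s0) (a0_gt0 : 0 < a0) (a01 : a0 <= a1).
Local Notation inA a := (a0 <= a <= a1).
Local Notation inS t := (s0 <= t <= s1).
Local Notation y t := (expR (c * t)).
Local Notation M := (symb_const s0 a1).

Fact a1_ge0 : 0 <= a1. Proof. exact: le_trans (ltW a0_gt0) a01. Qed.

Fact inA_ge0 a : inA a -> 0 <= a.
Proof. by case/andP=> h _; exact: le_trans (ltW a0_gt0) h. Qed.

Fact inS_expR_ge1 t : inS t -> 1 <= y t.
Proof.
case/andP=> h _; apply: le_trans (expR_ge1Dx _).
by rewrite lerDl mulr_ge0 // (le_trans (ltW s0_gt0)).
Qed.

Lemma symb_term_le (e b f m : R) j t : (j <= 3)%N -> inS t ->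
  `|f| <= m / y t -> m <= 6 + 4 * a1 -> -1 - a1 <= b <= 1 + a1 ->
  e = b * c ^+ j * f -> `|e| <= M.
Proof.
move=> j3 /andP[st _] hf hm hb he.
apply: (ler_norm_symb_term c_ge0 s0_gt0 a1_ge0 he _ j3 st hf hm).
by rewrite ler_norml; case/andP: hb => h1 h2; apply/andP; split; lra.
Qed.

Lemma symb_remainder_le a s ha hs :
  inA a -> inA (a + ha) -> inS s -> inS (s + hs) ->
  `|symb (a + ha) (y (s + hs)) - symb a (y s)
    - (hs * (- c * a * symb_a a (y s)) + ha * symb_a a (y s))|
  <= 2 * M * (hs ^+ 2 + ha ^+ 2).
Proof.
have a1_ge0 := a1_ge0.
apply: (ler_taylor2_remainder (G := fun a t => symb a (y t))
  (Gs := fun a t => - c * a * symb_a a (y t)) (Ga := fun a t => symb_a a (y t))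
  (Gss := fun a t => - c ^+ 2 * a * symb_ay a (y t))
  (Gaa := fun a t => symb_aa a (y t)) (Gsa := fun a t => c * symb_ay a (y t))).
- by move=> b t /inA_ge0 b0 _; exact: is_derive_symb_s.
- move=> b t /inA_ge0 b0 _.
  apply: is_derive_eq (is_deriveM _ (is_derive_symb_a_s c t b0)) _.
  by rewrite /GRing.scale /=; ring.
- by move=> b t /inA_ge0 b0 _; exact/is_derive_symb_a/symb_den_neq0.
- by move=> b t /inA_ge0 b0 _; exact/is_derive_symb_aa/symb_den_neq0.
- move=> b t /inA_ge0 b0 _; have h := symb_den_neq0 c t b0.
  apply: is_derive_eq (is_deriveM _ (is_derive_symb_aa h)) _.
  by rewrite /GRing.scale /symb_ay /symb_aa /symb_a /=; field.
- move=> b t hb ht; have b0 := inA_ge0 hb; have y1 := inS_expR_ge1 ht; split.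
  + apply: (symb_term_le (b := - b) (j := 2) isT ht (symb_ay_le b0 y1)); [lra|lra|ring].
  + apply: (symb_term_le (b := 1) (j := 0) isT ht (symb_aa_le b0 y1)); [lra|lra|ring].
  + apply: (symb_term_le (b := 1) (j := 1) isT ht (symb_ay_le b0 y1)); [lra|lra|ring].
Qed.

Lemma symb_a_remainder_le a s ha hs :
  inA a -> inA (a + ha) -> inS s -> inS (s + hs) ->
  `|symb_a (a + ha) (y (s + hs)) - symb_a a (y s)
    - (hs * (c * symb_ay a (y s)) + ha * symb_aa a (y s))|
  <= 2 * M * (hs ^+ 2 + ha ^+ 2).
Proof.
have a1_ge0 := a1_ge0.
apply: (ler_taylor2_remainder (G := fun a t => symb_a a (y t))
  (Gs := fun a t => c * symb_ay a (y t)) (Ga := fun a t => symb_aa a (y t))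
  (Gss := fun a t => c ^+ 2 * symb_ayy a (y t))
  (Gaa := fun a t => symb_aaa a (y t)) (Gsa := fun a t => c * symb_aay a (y t))).
- by move=> b t /inA_ge0 b0 _; exact: is_derive_symb_a_s.
- move=> b t /inA_ge0 b0 _.
  apply: is_derive_eq (is_deriveM _ (is_derive_symb_ay_s c t b0)) _.
  by rewrite /GRing.scale /=; ring.
- by move=> b t /inA_ge0 b0 _; exact/is_derive_symb_aa/symb_den_neq0.
- by move=> b t /inA_ge0 b0 _; exact/is_derive_symb_aaa/symb_den_neq0.
- move=> b t /inA_ge0 b0 _; have h := symb_den_neq0 c t b0.
  apply: is_derive_eq (is_deriveM _ (is_derive_symb_aay h)) _.
  by rewrite /GRing.scale /=; ring.
- move=> b t hb ht; have b0 := inA_ge0 hb; have y1 := inS_expR_ge1 ht; split.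
  + apply: (symb_term_le (b := 1) (j := 2) isT ht (symb_ayy_le b0 y1)); [lra|lra|ring].
  + apply: (symb_term_le (b := 1) (j := 0) isT ht (symb_aaa_le b0 y1)); [lra|lra|ring].
  + apply: (symb_term_le (b := 1) (j := 1) isT ht (symb_aay_le b0 y1)); [lra|lra|ring].
Qed.

Lemma symb_s_remainder_le a s ha hs :
  inA a -> inA (a + ha) -> inS s -> inS (s + hs) ->
  `|- c * (a + ha) * symb_a (a + ha) (y (s + hs)) - - c * a * symb_a a (y s)
    - (hs * (- c ^+ 2 * a * symb_ay a (y s)) + ha * (c * symb_ay a (y s)))|
  <= 2 * M * (hs ^+ 2 + ha ^+ 2).
Proof.
have a1_ge0 := a1_ge0.
apply: (ler_taylor2_remainder (G := fun a t => - c * a * symb_a a (y t))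
  (Gs := fun a t => - c ^+ 2 * a * symb_ay a (y t))
  (Ga := fun a t => c * symb_ay a (y t))
  (Gss := fun a t => - c ^+ 3 * a * symb_ayy a (y t))
  (Gaa := fun a t => c * symb_aay a (y t))
  (Gsa := fun a t => - c ^+ 2 * (symb_ay a (y t) + a * symb_aay a (y t)))).
- move=> b t /inA_ge0 b0 _.
  apply: is_derive_eq (is_deriveM _ (is_derive_symb_a_s c t b0)) _.
  by rewrite /GRing.scale /=; ring.
- move=> b t /inA_ge0 b0 _.
  apply: is_derive_eq (is_deriveM _ (is_derive_symb_ay_s c t b0)) _.
  by rewrite /GRing.scale /=; ring.
- move=> b t /inA_ge0 b0 _; have h := symb_den_neq0 c t b0.
  apply: is_derive_eq (is_deriveM _ (is_derive_symb_aa h)) _.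
  by rewrite /GRing.scale /symb_ay /symb_aa /symb_a /=; field.
- move=> b t /inA_ge0 b0 _; have h := symb_den_neq0 c t b0.
  apply: is_derive_eq (is_deriveM _ (is_derive_symb_aay h)) _.
  by rewrite /GRing.scale /=; ring.
- move=> b t /inA_ge0 b0 _; have h := symb_den_neq0 c t b0.
  apply: is_derive_eq (is_deriveM _ (is_derive_symb_aay h)) _.
  by rewrite /GRing.scale /=; ring.
- move=> b t hb ht; have b0 := inA_ge0 hb; have y1 := inS_expR_ge1 ht; split.
  + apply: (symb_term_le (b := - b) (j := 3) isT ht (symb_ayy_le b0 y1));
      [lra|lra|ring].
  + apply: (symb_term_le (b := 1) (j := 1) isT ht (symb_aay_le b0 y1)); [lra|lra|ring].
  + have hb' : 0 <= b <= a1 by rewrite b0; case/andP: hb.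
    apply: (symb_term_le (b := - 1) (j := 2) isT ht (symb_ay_aay_le hb' y1));
      [lra|lra|ring].
Qed.

Lemma symb_le_const a t : inA a -> inS t -> `|symb a (y t)| <= M.
Proof.
move=> /inA_ge0 a_ge0 /inS_expR_ge1 y1.
apply: le_trans (symb_le a_ge0 (lt_le_trans ltr01 y1)) _.
exact: symb_const_ge1 s0_gt0 a1_ge0.
Qed.

Lemma symb_derivatives_le_const a t : inA a -> inS t ->
  [/\ `|- c * a * symb_a a (y t)| <= M, `|symb_a a (y t)| <= M,
      `|- c ^+ 2 * a * symb_ay a (y t)| <= M, `|c * symb_ay a (y t)| <= M
    & `|symb_aa a (y t)| <= M].
Proof.
move=> ha ht; have a1_ge0 := a1_ge0; have b0 := inA_ge0 ha.
have y1 := inS_expR_ge1 ht; split.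
- apply: (symb_term_le (b := - a) (j := 1) isT ht (symb_a_le b0 y1)); [lra|lra|ring].
- apply: (symb_term_le (b := 1) (j := 0) isT ht (symb_a_le b0 y1)); [lra|lra|ring].
- apply: (symb_term_le (b := - a) (j := 2) isT ht (symb_ay_le b0 y1)); [lra|lra|ring].
- apply: (symb_term_le (b := 1) (j := 1) isT ht (symb_ay_le b0 y1)); [lra|lra|ring].
- apply: (symb_term_le (b := 1) (j := 0) isT ht (symb_aa_le b0 y1)); [lra|lra|ring].
Qed.

End SymbolRemainders.

Section SquareSummable.
Variable R : realType.
Local Open Scope complex_scope.

Lemma cmod2_ge0 (z : R[i]) : 0 <= cmod2 z.
Proof. by rewrite /cmod2 addr_ge0 // sqr_ge0. Qed.

Lemma cmod2_scale (r : R) (z : R[i]) : cmod2 (r%:C * z) = r ^+ 2 * cmod2 z.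
Proof. by case: z => x y; rewrite /cmod2 /=; ring. Qed.

Lemma esumZ_le (T : choiceType) (u : T -> R) (c : R) : 0 <= c ->
  (forall k, 0 <= u k) ->
  (\esum_(k in [set: T]) (c * u k)%:E <= c%:E * \esum_(k in [set: T]) (u k)%:E)%E.
Proof.
move=> c0 u0; apply: ge_ereal_sup => _ [A [finA _] <-] /=.
rewrite (eq_fsbigr (fun k => c%:E * (u k)%:E)%E); last by move=> k _; rewrite EFinM.
rewrite -ge0_mule_fsumr; last by move=> k; rewrite lee_fin.
apply: lee_wpmul2l; first by rewrite lee_fin.
by apply: ereal_sup_ubound; exists A.
Qed.

Lemma l2norm_ge0 d (u : freq d -> R[i]) : 0 <= l2norm u.
Proof. exact: sqrtr_ge0. Qed.

Lemma l2_multiplier_bound d (g u : freq d -> R[i]) (r : freq d -> R) (B : R) :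
  in_l2 g -> g 0 = 0 -> 0 <= B ->
  (forall k, u k = (r k)%:C * g k) -> (forall k, k != 0 -> `|r k| <= B) ->
  in_l2 u /\ l2norm u <= B * l2norm g.
Proof.
move=> hg g0 B0 hu hr.
have hpt k : cmod2 (u k) <= B ^+ 2 * cmod2 (g k).
  rewrite hu cmod2_scale; have [->|k0] := eqVneq k 0.
    by rewrite g0 /cmod2 /= expr0n /= addr0 !mulr0.
  rewrite ler_wpM2r ?cmod2_ge0 // -real_normK ?num_real //.
  by rewrite lerXn2r ?nnegrE ?hr.
have le2 : (l2norm2 u <= (B ^+ 2)%:E * l2norm2 g)%E.
  apply: le_trans (esumZ_le (sqr_ge0 B) (fun k => cmod2_ge0 (g k))).
  by apply: le_esum => k _; rewrite lee_fin.
have g2_ge0 : (0 <= l2norm2 g)%E by apply: esum_ge0 => k _; rewrite lee_fin cmod2_ge0.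
have u2_ge0 : (0 <= l2norm2 u)%E by apply: esum_ge0 => k _; rewrite lee_fin cmod2_ge0.
have gfin : l2norm2 g \is a fin_num by rewrite ge0_fin_numE.
have hu2 : in_l2 u.
  by apply: le_lt_trans le2 _; rewrite -(fineK gfin) -EFinM ltry.
split => //; have ufin : l2norm2 u \is a fin_num by rewrite ge0_fin_numE.
rewrite /l2norm -(ger0_norm B0) -sqrtr_sqr -sqrtrM ?sqr_ge0 //.
rewrite ler_sqrt ?mulr_ge0 ?sqr_ge0 ?fine_ge0 //.
by rewrite -lee_fin EFinM !fineK.
Qed.

Lemma first_order_remainderC (x x' dx1 dx2 h1 h2 : R) (z : R[i]) :
  x'%:C * z - x%:C * z - (h1%:C * (dx1%:C * z) + h2%:C * (dx2%:C * z))
  = (x' - x - (h1 * dx1 + h2 * dx2))%:C * z.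
Proof. by rewrite !(rmorphB, rmorphD, rmorphM) /=; ring. Qed.

Lemma second_order_remainderC (q1 q2 h1 h2 A A' B B' Css Csa Caa : R) (z : R[i]) :
  q1%:C * (A'%:C * z - A%:C * z) + q2%:C * (B'%:C * z - B%:C * z)
  - ((h1 * q1)%:C * (Css%:C * z) + (h1 * q2 + h2 * q1)%:C * (Csa%:C * z)
     + (h2 * q2)%:C * (Caa%:C * z))
  = (q1 * (A' - A - (h1 * Css + h2 * Csa))
     + q2 * (B' - B - (h1 * Csa + h2 * Caa)))%:C * z.
Proof. by rewrite !(rmorphB, rmorphD, rmorphM) /=; ring. Qed.

End SquareSummable.

Section FourierSymbols.
Variable R : realType.
Variables (d : nat) (g : freq d -> R[i]).
Hypothesis g0 : g 0 = 0.
Local Open Scope complex_scope.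

Definition ln_knorm2 (k : freq d) : R := 2 * ln (knorm R k).

Lemma knorm_ge1 (k : freq d) : k != 0 -> 1 <= knorm R k.
Proof.
move=> k0; have [i ki] : exists i, k ord0 i != 0.
  apply/existsP; apply: contraR k0 => /existsPn ki.
  by apply/eqP/matrixP => i j; rewrite (ord1 i) mxE; apply/eqP/negbNE/ki.
rewrite -sqrtr1 ler_sqrt; last by apply: sumr_ge0 => j _; exact: sqr_ge0.
rewrite (bigD1 i) //= ler_wpDr //; first by apply: sumr_ge0 => j _; exact: sqr_ge0.
by rewrite expr2 -intrM ler1z; lia.
Qed.

Lemma ln_knorm2_ge0 k : k != 0 -> 0 <= ln_knorm2 k.
Proof. by move=> k0; rewrite mulr_ge0 // ln_ge0 // knorm_ge1. Qed.

Lemma knorm_powR k s : k != 0 -> knorm R k `^ (2 * s) = expR (ln_knorm2 k * s).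
Proof.
move=> k0; have kpos : 0 < knorm R k := lt_le_trans ltr01 (knorm_ge1 k0).
by rewrite /powR gt_eqF // /ln_knorm2; congr expR; ring.
Qed.

Local Notation y k s := (expR (ln_knorm2 k * s)).

Lemma Ssol_coef (p : R * R) k : Ssol g p k = (symb p.2 (y k p.1))%:C * g k.
Proof.
have [->|k0] := eqVneq k 0; first by rewrite /Ssol g0 !mulr0.
by rewrite /Ssol knorm_powR.
Qed.

Lemma dS_s_coef (p : R * R) k : 0 <= p.2 ->
  dS_s g p k = (- ln_knorm2 k * p.2 * symb_a p.2 (y k p.1))%:C * g k.
Proof.
move=> a0; have [->|k0] := eqVneq k 0; first by rewrite /dS_s eqxx g0 mulr0.
rewrite /dS_s (negbTE k0) /= knorm_powR //; congr (_%:C * _).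
have := symb_den_neq0 (ln_knorm2 k) p.1 a0; rewrite /symb_a /ln_knorm2 => h.
by field; rewrite // addrC.
Qed.

Lemma dS_a_coef (p : R * R) k : 0 <= p.2 ->
  dS_a g p k = (symb_a p.2 (y k p.1))%:C * g k.
Proof.
move=> a0; have [->|k0] := eqVneq k 0; first by rewrite /dS_a eqxx g0 mulr0.
rewrite /dS_a (negbTE k0) /= knorm_powR //; congr (_%:C * _).
have := symb_den_neq0 (ln_knorm2 k) p.1 a0; rewrite /symb_a => h.
by field; rewrite // addrC.
Qed.

Lemma dS_ss_coef (p : R * R) k : 0 <= p.2 ->
  dS_ss g p k = (- ln_knorm2 k ^+ 2 * p.2 * symb_ay p.2 (y k p.1))%:C * g k.
Proof.
move=> a0; have [->|k0] := eqVneq k 0; first by rewrite /dS_ss eqxx g0 mulr0.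
rewrite /dS_ss (negbTE k0) /= knorm_powR //; congr (_%:C * _).
have := symb_den_neq0 (ln_knorm2 k) p.1 a0; rewrite /symb_ay /ln_knorm2 => h.
by field; rewrite // addrC.
Qed.

Lemma dS_as_coef (p : R * R) k : 0 <= p.2 ->
  dS_as g p k = (ln_knorm2 k * symb_ay p.2 (y k p.1))%:C * g k.
Proof.
move=> a0; have [->|k0] := eqVneq k 0; first by rewrite /dS_as eqxx g0 mulr0.
rewrite /dS_as (negbTE k0) /= knorm_powR //; congr (_%:C * _).
have := symb_den_neq0 (ln_knorm2 k) p.1 a0; rewrite /symb_ay /ln_knorm2 => h.
by field; rewrite // addrC.
Qed.

Lemma dS_aa_coef (p : R * R) k : 0 <= p.2 ->
  dS_aa g p k = (symb_aa p.2 (y k p.1))%:C * g k.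
Proof.
move=> a0; have [->|k0] := eqVneq k 0; first by rewrite /dS_aa eqxx g0 mulr0.
rewrite /dS_aa (negbTE k0) /= knorm_powR //; congr (_%:C * _).
have := symb_den_neq0 (ln_knorm2 k) p.1 a0; rewrite /symb_aa => h.
by field; rewrite // addrC.
Qed.

End FourierSymbols.

Lemma quadratic_le_linear (R : realType) (C e : R) : 0 <= C -> 0 < e ->
  exists2 delta : R, 0 < delta &
    forall N : R, 0 <= N -> N < delta -> C * N ^+ 2 <= e * N.
Proof.
move=> C0 e0; exists (e / (C + 1)); first by rewrite divr_gt0 // ltr_wpDl.
move=> N N0; rewrite ltr_pdivlMr ?ltr_wpDl // => hN.
by rewrite expr2 mulrA ler_wpM2r //; nra.
Qed.

Section NormR2.
Variable R : realType.
Implicit Types h : R * R.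

Lemma nrm2_ge0 h : 0 <= nrm2 h.
Proof. exact: sqrtr_ge0. Qed.

Lemma sqr_nrm2 h : nrm2 h ^+ 2 = h.1 ^+ 2 + h.2 ^+ 2.
Proof. by rewrite /nrm2 sqr_sqrtr // addr_ge0 // sqr_ge0. Qed.

Lemma ler_norm_nrm2 h : `|h.1| <= nrm2 h /\ `|h.2| <= nrm2 h.
Proof.
rewrite /nrm2 -!sqrtr_sqr !ler_sqrt ?addr_ge0 ?sqr_ge0 //.
by rewrite lerDl lerDr !sqr_ge0.
Qed.

End NormR2.

Section Differentiability.
Variable R : realType.
Variables (d : nat) (s0 s1 a0 a1 : R) (g : freq d -> R[i]).
Hypotheses (s0_gt0 : 0 < s0) (a0_gt0 : 0 < a0) (a01 : a0 <= a1).
Hypotheses (g_l2 : in_l2 g) (g0 : g 0 = 0).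
Local Notation W := [set p : R * R | s0 <= p.1 <= s1 /\ a0 <= p.2 <= a1].
Local Notation M := (symb_const s0 a1).
Local Open Scope complex_scope.

Let M_ge0 : 0 <= M.
Proof. exact: le_trans ler01 (symb_const_ge1 s0_gt0 (a1_ge0 a0_gt0 a01)). Qed.

Lemma bounded_symb_in_l2 (u : freq d -> R[i]) (r : freq d -> R) :
  (forall k, u k = (r k)%:C * g k) -> (forall k, k != 0 -> `|r k| <= M) -> in_l2 u.
Proof. by move=> hu hr; case: (l2_multiplier_bound g_l2 g0 M_ge0 hu hr). Qed.

Lemma Ssol_in_l2 p : W p -> in_l2 (Ssol g p).
Proof.
move=> [ps pa]; apply: bounded_symb_in_l2 (Ssol_coef g0 p) _ => k k0.
exact: (symb_le_const (ln_knorm2_ge0 R k0) s0_gt0 a0_gt0 a01 pa ps).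
Qed.

Lemma derivatives_in_l2 p : W p ->
  [/\ in_l2 (dS_s g p), in_l2 (dS_a g p), in_l2 (dS_ss g p), in_l2 (dS_as g p)
    & in_l2 (dS_aa g p)].
Proof.
move=> [ps pa]; have p2_ge0 := inA_ge0 a0_gt0 pa.
have hb (k : freq d) (k0 : k != 0) :=
  symb_derivatives_le_const (ln_knorm2_ge0 R k0) s0_gt0 a0_gt0 a01 pa ps.
split; [ apply: (bounded_symb_in_l2 (fun k => dS_s_coef g0 k p2_ge0))
       | apply: (bounded_symb_in_l2 (fun k => dS_a_coef g0 k p2_ge0))
       | apply: (bounded_symb_in_l2 (fun k => dS_ss_coef g0 k p2_ge0))
       | apply: (bounded_symb_in_l2 (fun k => dS_as_coef g0 k p2_ge0))
       | apply: (bounded_symb_in_l2 (fun k => dS_aa_coef g0 k p2_ge0)) ];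
  by move=> k /hb[].
Qed.

Lemma Ssol_frechet p : W p -> frechet_within W (Ssol g) p (dS_s g p) (dS_a g p).
Proof.
move=> Wp; have [l2s l2a _ _ _] := derivatives_in_l2 Wp; move: Wp => [ps pa].
split => //; split => // e e0.
have C0 : 0 <= 2 * M * l2norm g := mulr_ge0 (mulr_ge0 (ler0n _ 2) M_ge0) (l2norm_ge0 g).
have [delta delta0 hdelta] := quadratic_le_linear C0 e0.
exists delta => // h [hs ha] hh; rewrite /Defs.shift /= in hs ha.
pose r (k : freq d) : R := let c := ln_knorm2 R k in
  symb (p.2 + h.2) (expR (c * (p.1 + h.1))) - symb p.2 (expR (c * p.1))
  - (h.1 * (- c * p.2 * symb_a p.2 (expR (c * p.1)))
     + h.2 * symb_a p.2 (expR (c * p.1))).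
have p2_ge0 := inA_ge0 a0_gt0 pa.
set U := (X in in_l2 X).
have [] := l2_multiplier_bound (u := U) (r := r) (B := 2 * M * nrm2 h ^+ 2)
  g_l2 g0 _ _ _.
- by rewrite mulr_ge0 ?sqr_ge0 // mulr_ge0.
- move=> k; rewrite /U /Defs.shift !(Ssol_coef g0) (dS_s_coef g0) // (dS_a_coef g0) //.
  by rewrite first_order_remainderC.
- move=> k k0; rewrite sqr_nrm2.
  exact: (symb_remainder_le (ln_knorm2_ge0 R k0) s0_gt0 a0_gt0 a01 pa ha ps hs).
move=> l2r hr; split => //; apply: le_trans hr _.
have := hdelta _ (nrm2_ge0 h) hh.
by rewrite [in X in X -> _]mulrAC.
Qed.

Lemma dS_frechet2 p : W p ->
  frechet2_within W (dS_s g) (dS_a g) p (dS_ss g p) (dS_as g p) (dS_aa g p).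
Proof.
move=> Wp; have [_ _ l2ss l2as l2aa] := derivatives_in_l2 Wp; move: Wp => [ps pa].
do 3!split => //; move=> e e0.
have C0 : 0 <= 4 * M * l2norm g := mulr_ge0 (mulr_ge0 (ler0n _ 4) M_ge0) (l2norm_ge0 g).
have [delta delta0 hdelta] := quadratic_le_linear C0 e0.
exists delta => // h [hs ha] hh q T; rewrite /Defs.shift /= in hs ha.
have p2_ge0 := inA_ge0 a0_gt0 pa.
have p2h_ge0 := inA_ge0 a0_gt0 ha.
pose RA (k : freq d) : R := let c := ln_knorm2 R k in
  - c * (p.2 + h.2) * symb_a (p.2 + h.2) (expR (c * (p.1 + h.1)))
  - - c * p.2 * symb_a p.2 (expR (c * p.1))
  - (h.1 * (- c ^+ 2 * p.2 * symb_ay p.2 (expR (c * p.1)))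
     + h.2 * (c * symb_ay p.2 (expR (c * p.1)))).
pose RB (k : freq d) : R := let c := ln_knorm2 R k in
  symb_a (p.2 + h.2) (expR (c * (p.1 + h.1))) - symb_a p.2 (expR (c * p.1))
  - (h.1 * (c * symb_ay p.2 (expR (c * p.1))) + h.2 * symb_aa p.2 (expR (c * p.1))).
have [] := l2_multiplier_bound (u := T) (r := fun k => q.1 * RA k + q.2 * RB k)
  (B := 4 * M * nrm2 h ^+ 2 * nrm2 q) g_l2 g0 _ _ _.
- exact: mulr_ge0 (mulr_ge0 (mulr_ge0 (ler0n _ 4) M_ge0) (sqr_ge0 _)) (nrm2_ge0 q).
- move=> k; rewrite /T /Defs.shift !(dS_s_coef g0) // !(dS_a_coef g0) //.
  rewrite (dS_ss_coef g0) // (dS_as_coef g0) // (dS_aa_coef g0) //.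
  by rewrite second_order_remainderC.
- move=> k k0; have c0 := ln_knorm2_ge0 R k0.
  have hA := symb_s_remainder_le c0 s0_gt0 a0_gt0 a01 pa ha ps hs.
  have hB := symb_a_remainder_le c0 s0_gt0 a0_gt0 a01 pa ha ps hs.
  rewrite -sqr_nrm2 -/(RA k) -/(RB k) in hA hB.
  have [q1 q2] := ler_norm_nrm2 q.
  apply: le_trans (ler_normD _ _) _; rewrite !normrM.
  have := normr_ge0 q.1; have := normr_ge0 q.2.
  have := normr_ge0 (RA k); have := normr_ge0 (RB k); nra.
move=> l2T hT; split => //; apply: le_trans hT _.
have := ler_wpM2r (nrm2_ge0 q) (hdelta _ (nrm2_ge0 h) hh).
by congr (_ <= _); ring.
Qed.

End Differentiability.

Theorem theorem2 (R : realType) (d : nat) (s0 s1 a0 a1 : R)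
  (g : freq d -> R[i]) :
  (1 <= d)%N -> 0 < s0 -> s0 < s1 -> 0 < a0 -> a0 < a1 ->
  in_l2 g -> g 0 = 0 ->
  let W := [set p : R * R | s0 <= p.1 <= s1 /\ a0 <= p.2 <= a1] in
  (forall p, W p -> in_l2 (Ssol g p)) /\
  (forall p, W p -> frechet_within W (Ssol g) p (dS_s g p) (dS_a g p)) /\
  (forall p, W p ->
     frechet2_within W (dS_s g) (dS_a g) p (dS_ss g p) (dS_as g p) (dS_aa g p)).
Proof.
move=> _ s0_gt0 _ a0_gt0 /ltW a01 g_l2 g0 W.
split; [|split] => p Wp.
- exact: (Ssol_in_l2 s0_gt0 a0_gt0 a01 g_l2 g0 Wp).
- exact: (Ssol_frechet s0_gt0 a0_gt0 a01 g_l2 g0 Wp).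
- exact: (dS_frechet2 s0_gt0 a0_gt0 a01 g_l2 g0 Wp).
Qed.
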